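(* Let $G=(V,E,\omega)\in\mathcal G$. For $i,j\in V$ let $\mathcal N(j)=\{k\in V:\omega_{jk}>0\}$ and $\mathcal N_s(i,j):=\sum_{k\in\mathcal N(j)}\omega_{ik}$. Then: (1) if for all $j\in V$ and all $i\in\mathcal N(j)$ we have $\omega_{ij}\,\mathcal M(\nu^{V\setminus\{j\}})\leq\mathrm{vol}(V)\,d_i^r$, then $G\in\mathcal C$; (2) if for all $j\in V$ and all $i\in V\setminus(\{j\}\cup\mathcal N(j))$ we have $\mathcal N_s(i,j)\,\mathcal M(\nu^{V\setminus\{j\}})\leq\mathrm{vol}(V)\,d_i^r$, then $G\in\mathcal C^0$.
   Context: $\mathcal{G}$ is the set of finite, simple, connected, undirected, edge-weighted graphs $G=(V,E,\omega)$ with $V=\{1,\dots,n\}$, $n\geq2$, weights $\omega_{ij}=\omega_{ji}>0$ on edges, $0$ otherwise. $d_i=\sum_j\omega_{ij}$. Fixed $r\in[0,1]$: for $u:V\to\mathbb R$, $(\Delta u)_i=d_i^{-r}\sum_j\omega_{ij}(u_i-u_j)$, $\mathcal M(u)=\sum_id_i^ru_i$, $\mathrm{vol}(V)=\sum_id_i^r$, $\mathcal A(u)=\frac{\mathcal M(u)}{\mathrm{vol}(V)}\chi_V$. Equilibrium measure $\nu^S$ ($S\subsetneq V$): unique $\nu$ with $(\Delta\nu)_i=1$ on $S$, $\nu=0$ off $S$. $f^j:=\nu^{V\setminus\{j\}}-\mathcal A(\nu^{V\setminus\{j\}})$. $\mathcal C=\{G\in\mathcal G:\forall j\ \forall i\neq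 j:\ f^j_i\geq0\}$; $\mathcal C^0=\{G\in\mathcal G:\forall j\ \forall i\neq j:\ \omega_{ij}>0\text{ or }f^j_i\geq0\}$. *)

From HB Require Import structures.
From mathcomp Require Import all_boot all_order all_algebra.
From mathcomp Require Import all_classical all_reals all_analysis.
From Stdlib Require Import ClassicalEpsilon.
Set Implicit Arguments. Unset Strict Implicit. Unset Printing Implicit Defensive.
Import Order.TTheory GRing.Theory Num.Theory.
Local Open Scope ring_scope.

Section Defs.
Context {R : realType} {n : nat}.
Implicit Types (w : 'I_n -> 'I_n -> R) (r : R) (u : 'I_n -> R).

Definition in_graph_class w : Prop :=
  [/\ (2 <= n)%N,
      (forall i j, w i j = w j i),
      (forall i j, 0 <= w i j),
      (forall i, w i i = 0) &
      (forall i j, connect (fun a b => 0 < w a b) i j)].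

Definition deg w (i : 'I_n) : R := \sum_j w i j.

Definition lap r w u (i : 'I_n) : R :=
  ((deg w i) `^ r)^-1 * \sum_j w i j * (u i - u j).

Definition mass r w u : R := \sum_i (deg w i) `^ r * u i.

Definition vol r w : R := \sum_i (deg w i) `^ r.

Definition is_equilibrium r w (S : {set 'I_n}) u : Prop :=
  (forall i, i \in S -> lap r w u i = 1) /\ (forall i, i \notin S -> u i = 0).

(* the (unique, for S a proper subset of a connected graph) equilibrium measure *)
Definition equilibrium r w (S : {set 'I_n}) : 'I_n -> R :=
  epsilon (inhabits (fun _ => 0)) (is_equilibrium r w S).

Definition nuc r w (j : 'I_n) : 'I_n -> R := equilibrium r w (~: [set j]).

Definition fj r w (j : 'I_n) : 'I_n -> R :=
  fun i => nuc r w j i - mass r w (nuc r w j) / vol r w.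

Definition in_C r w : Prop :=
  in_graph_class w /\ forall j i, i != j -> 0 <= fj r w j i.

Definition in_C0 r w : Prop :=
  in_graph_class w /\ forall j i, i != j -> 0 < w i j \/ 0 <= fj r w j i.

Definition Ns w (i j : 'I_n) : R := \sum_(k | 0 < w j k) w i k.

End Defs.

From HB Require Import structures.
From mathcomp Require Import all_boot all_order all_algebra.
From mathcomp Require Import all_classical all_reals all_analysis.
From Stdlib Require Import ClassicalEpsilon.
Import Order.TTheory GRing.Theory Num.Theory.
Local Open Scope ring_scope.

(* Write u = nu^{V\{j}}, so that u_j = 0 and sum_k w_ik (u_i - u_k) = d_i^r
   off j, and f^j_i >= 0 means M(u) <= vol(V) u_i. If m minimizes u over a set A
   of vertices avoiding j, every term of this sum with k in A is <= 0, so
   d_m^r <= sum_(k notin A) w_mk (u_m - u_k). For A = V\{j} this gives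
   d_m^r <= w_mj u_m (so m is a neighbour of j and u >= 0); for A the
   non-neighbours of j it gives d_m^r <= N_s(m,j) u_m. Combined with the
   hypothesis at m, c M(u) <= vol(V) d_m^r <= vol(V) c u_m, hence
   M(u) <= vol(V) u_m <= vol(V) u_i. Existence of nu comes from the maximum
   principle, which makes the Dirichlet problem injective, hence solvable. *)

Lemma le_of_scaled_bounds {R : realFieldType} {c d x M V : R} :
  0 < d -> 0 <= c -> 0 <= V -> c * M <= V * d -> d <= c * x -> M <= x * V.
Proof.
move=> d_gt0 c_ge0 V_ge0 cM_le dx_le.
have c_gt0 : 0 < c.
  rewrite lt_def c_ge0 andbT; apply: contraTneq dx_le => ->.
  by rewrite mul0r -ltNge.
rewrite -(ler_pM2l c_gt0); apply: le_trans cM_le _.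
by rewrite mulrA [_ * V]mulrC ler_wpM2l.
Qed.

Definition ulap {R : realType} {n : nat} (w : 'I_n -> 'I_n -> R)
    (u : 'I_n -> R) (k : 'I_n) : R :=
  \sum_i w k i * (u k - u i).

Section Graph.
Context {R : realType} {n : nat} {w : 'I_n -> 'I_n -> R}.

Lemma ulapE u k : ulap w u k = deg w k * u k - \sum_i w k i * u i.
Proof.
by rewrite /ulap /deg mulr_suml -sumrB; apply: eq_bigr => i _; rewrite mulrBr.
Qed.

Lemma ulapN u k : ulap w (fun i => - u i) k = - ulap w u k.
Proof.
rewrite /ulap -sumrN; apply: eq_bigr => i _.
by rewrite -mulrN opprB opprK addrC.
Qed.

Hypothesis w_ge0 : forall i j, 0 <= w i j.

Lemma ulap_le_outside {A : pred 'I_n} {u m} :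
  (forall k, A k -> u m <= u k) ->
  ulap w u m <= \sum_(k | ~~ A k) w m k * (u m - u k).
Proof.
move=> m_min; rewrite /ulap (bigID A) /= -[leRHS]add0r lerD2r.
by apply: sumr_le0 => k /m_min umk; rewrite mulr_ge0_le0 // subr_le0.
Qed.

Hypothesis w_conn : forall i j, connect (fun a b => 0 < w a b) i j.

Lemma subharmonic_le0 j v :
  v j = 0 -> (forall k, k != j -> ulap w v k <= 0) -> forall i, v i <= 0.
Proof.
move=> vj v_sub.
have [m _ m_max] := arg_maxP v (isT : predT j).
suff vm0 : v m = 0 by move=> i; rewrite -vm0; apply: m_max.
have /connectP [p] := w_conn m j.
elim: p m m_max => [|y p IHp] x x_max /=; first by move=> _ <-.
case/andP=> wxy pth lst; have [-> //|xj] := eqVneq x j.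
suff vxy : v y = v x.
  by rewrite -vxy; apply: IHp pth lst => i _; rewrite vxy; apply: x_max.
have terms_ge0 i : 0 <= w x i * (v x - v i)
  by rewrite mulr_ge0 // subr_ge0; apply: x_max.
have := v_sub x xj; rewrite /ulap (bigD1 y) //= => sum_le0.
have : w x y * (v x - v y) == 0.
  rewrite eq_le terms_ge0 andbT; apply: le_trans sum_le0; rewrite lerDl.
  exact: sumr_ge0.
by rewrite mulf_eq0 gt_eqF //= subr_eq0 => /eqP.
Qed.

Lemma harmonic_eq0 j v :
  v j = 0 -> (forall k, k != j -> ulap w v k = 0) -> forall i, v i = 0.
Proof.
move=> vj v_harm i; apply/le_anti/andP; split.
  by apply: (subharmonic_le0 _ _ vj) => k /v_harm ->.
rewrite -oppr_le0; apply: (subharmonic_le0 j (fun i => - v i)) => [|k kj].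
  by rewrite vj oppr0.
by rewrite ulapN v_harm ?oppr0.
Qed.

Hypothesis n_gt1 : (1 < n)%N.

Lemma exists_neq (j : 'I_n) : exists k, k != j.
Proof.
have [<-|] := eqVneq (Ordinal n_gt1) j; last by exists (Ordinal n_gt1).
by exists (Ordinal (ltnW n_gt1)).
Qed.

Lemma deg_gt0 i : 0 < deg w i.
Proof.
have [k ki] := exists_neq i.
have /connectP [[/= _ ik | y p /= /andP [wiy _] _]] := w_conn i k.
  by rewrite -ik eqxx in ki.
by rewrite /deg (bigD1 y) //= ltr_pwDl // sumr_ge0.
Qed.

Variable r : R.

Lemma powR_deg_gt0 i : 0 < deg w i `^ r.
Proof. by rewrite powR_gt0 ?deg_gt0. Qed.

Lemma vol_gt0 : 0 < vol r w.
Proof.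
rewrite /vol (bigD1 (Ordinal n_gt1)) //= ltr_pwDl ?powR_deg_gt0 //.
by apply: sumr_ge0 => *; apply: powR_ge0.
Qed.

Lemma exists_equilibrium j : exists u, is_equilibrium r w (~: [set j]) u.
Proof.
pose A : 'M[R]_n := \matrix_(i, k)
  if k == j then (i == k)%:R else (i == k)%:R * deg w k - w k i.
have sum_delta (v : 'rV[R]_n) k (c : R) :
    \sum_i v 0 i * ((i == k)%:R * c) = v 0 k * c.
  rewrite (bigD1 k) //= eqxx mul1r big1 ?addr0 // => i /negPf ->.
  by rewrite mul0r mulr0.
have mulA (v : 'rV[R]_n) k :
    (v *m A) 0 k = if k == j then v 0 j else ulap w (v 0) k.
  rewrite mxE ulapE; under eq_bigr => i _ do rewrite mxE.
  case: eqP => [->|_].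
    by under eq_bigr => i _ do rewrite -[_%:R]mulr1; rewrite sum_delta mulr1.
  under eq_bigr => i _ do rewrite mulrBr.
  by rewrite sumrB sum_delta mulrC; under eq_bigr => i _ do rewrite mulrC.
have A_unit : A \in unitmx.
  rewrite unitmxE unitfE; apply/negP => /det0P [v v_neq0 vA0].
  apply: (negP v_neq0).
  have vA k : (v *m A) 0 k = 0 by rewrite vA0 mxE.
  apply/eqP/rowP => i; rewrite mxE (harmonic_eq0 j (v 0)) //.
    by rewrite -(vA j) mulA eqxx.
  by move=> k /negPf kj; rewrite -(vA k) mulA kj.
pose b : 'rV[R]_n := \row_k if k == j then 0 else deg w k `^ r.
have bA : (b *m invmx A) *m A = b by rewrite mulmxKV.
exists ((b *m invmx A) 0); split=> k; rewrite !inE ?negbK.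
  move=> /negPf kj; have := mulA (b *m invmx A) k; rewrite bA mxE kj => dk.
  by rewrite /lap -/(ulap w _ k) -dk mulVf ?gt_eqF ?powR_deg_gt0.
by move=> /eqP ->; have := mulA (b *m invmx A) j; rewrite bA mxE eqxx.
Qed.

Lemma nuc_equilibrium j : is_equilibrium r w (~: [set j]) (nuc r w j).
Proof. exact: (epsilon_spec _ _ (exists_equilibrium j)). Qed.

Lemma nuc_eq0 j : nuc r w j j = 0.
Proof. by apply: (nuc_equilibrium j).2; rewrite !inE negbK. Qed.

Lemma ulap_nuc j k : k != j -> ulap w (nuc r w j) k = deg w k `^ r.
Proof.
move=> kj; have := (nuc_equilibrium j).1 k; rewrite !inE kj /lap -/(ulap w _ k).
by move=> /(_ isT) /(canRL (mulVKf (lt0r_neq0 (powR_deg_gt0 k)))) ->; rewrite mulr1.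
Qed.

Lemma nuc_min_neighbor j : exists m, [/\ m != j, 0 < w m j,
  forall k, k != j -> nuc r w j m <= nuc r w j k &
  deg w m `^ r <= w m j * nuc r w j m].
Proof.
have [k kj] := exists_neq j.
have [m mj m_min] := arg_minP (nuc r w j) (kj : (fun k => k != j) k).
have dm_le : deg w m `^ r <= w m j * nuc r w j m.
  rewrite -(ulap_nuc j m mj) (le_trans (ulap_le_outside m_min)) //.
  by rewrite (big_pred1 j) ?nuc_eq0 ?subr0 // => i; rewrite /= negbK.
exists m; split=> //; rewrite lt_def w_ge0 andbT; apply: contraTneq dm_le => ->.
by rewrite mul0r -ltNge powR_deg_gt0.
Qed.

Lemma nuc_ge0 j k : 0 <= nuc r w j k.
Proof.
have [-> | kj] := eqVneq k j; first by rewrite nuc_eq0.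
have [m [_ wmj m_min dm_le]] := nuc_min_neighbor j.
apply: le_trans (m_min k kj); rewrite -(pmulr_rge0 _ wmj).
exact: le_trans (ltW (powR_deg_gt0 m)) dm_le.
Qed.

Hypothesis w_sym : forall i j, w i j = w j i.

Lemma nuc_min_nonneighbor j i : i != j -> ~~ (0 < w j i) -> exists m,
  [/\ m != j, ~~ (0 < w j m), nuc r w j m <= nuc r w j i &
  deg w m `^ r <= Ns w m j * nuc r w j m].
Proof.
move=> ij wji; pose far k := (k != j) && ~~ (0 < w j k).
have far_i : far i by rewrite /far ij.
have [m /andP [mj wjm] m_min] := arg_minP (nuc r w j) far_i.
exists m; split=> //; first exact: m_min.
rewrite -(ulap_nuc j m mj) (le_trans (ulap_le_outside m_min)) //.
rewrite /Ns mulr_suml big_mkcond [leRHS]big_mkcond /=; apply: ler_sum => k _.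
rewrite /far negb_and !negbK; case: (0 < w j k).
  by rewrite orbT ler_wpM2l // gerDl oppr_le0 nuc_ge0.
rewrite orbF; have [-> | _] := eqVneq k j => //=.
have /eqP wjm0 : w j m == 0 by rewrite eq_le w_ge0 andbT leNgt.
by rewrite w_sym wjm0 mul0r.
Qed.

Lemma fj_ge0_of_bound {j i m c} :
  nuc r w j m <= nuc r w j i -> 0 <= c ->
  c * mass r w (nuc r w j) <= vol r w * deg w m `^ r ->
  deg w m `^ r <= c * nuc r w j m -> 0 <= fj r w j i.
Proof.
move=> m_le c_ge0 cM_le dm_le; rewrite /fj subr_ge0 ler_pdivrMr ?vol_gt0 //.
apply: le_trans (le_of_scaled_bounds (powR_deg_gt0 m) c_ge0 _ cM_le dm_le) _.
  exact: ltW vol_gt0.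
by rewrite ler_wpM2r // ltW ?vol_gt0.
Qed.

End Graph.

Theorem lemma6p6 (R : realType) (n : nat) (r : R) (w : 'I_n -> 'I_n -> R) :
  0 <= r -> r <= 1 -> in_graph_class w ->
  ((forall j i : 'I_n, 0 < w j i ->
      w i j * mass r w (nuc r w j) <= vol r w * (deg w i) `^ r) ->
    in_C r w) /\
  ((forall j i : 'I_n, i != j -> ~~ (0 < w j i) ->
      Ns w i j * mass r w (nuc r w j) <= vol r w * (deg w i) `^ r) ->
    in_C0 r w).
Proof.
move=> _ _ G; have [n_gt1 w_sym w_ge0 _ w_conn] := G.
split=> hyp; split=> // j i ij.
  have [m [mj wmj m_min dm_le]] := nuc_min_neighbor w_ge0 w_conn n_gt1 r j.
  apply: (fj_ge0_of_bound w_ge0 w_conn n_gt1 r (m_min i ij) (ltW wmj) _ dm_le).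
  by apply: hyp; rewrite w_sym.
have [wij | wji] := boolP (0 < w i j); [by left | right].
rewrite w_sym in wji.
have [m [mj wjm m_le dm_le]] :=
  nuc_min_nonneighbor w_ge0 w_conn n_gt1 r w_sym j i ij wji.
apply: (fj_ge0_of_bound w_ge0 w_conn n_gt1 r m_le _ (hyp j m mj wjm) dm_le).
by apply: sumr_ge0 => k _; apply: w_ge0.
Qed.
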